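(* Let $f$ be a piecewise contracting interval map satisfying the separation property, let $x\in\widetilde X$ and let $\theta$ be its itinerary. Then \[ \#\Delta^n_{lr}(x)\leqslant p(\theta,n+1)-p(\theta,n)\leqslant\#\Delta\qquad\forall\, n\geqslant 1. \] Moreover, if $n_0\geqslant 1$ is the smallest integer such that $\#(A\cap\Delta)\leqslant 1$ for every $A\in\mathcal{A}_n(x)$ and every $n\geqslant n_0$, then \[ p(\theta,n+1)=p(\theta,n)+\#\Delta^n_{lr}(x)\qquad\forall\, n\geqslant n_0. \]
   Context: Let $X$ be a compact interval of $\mathbb{R}$ and $X_1<\dots<X_N$ ($N\geqslant 2$) non-empty pairwise disjoint intervals, open in $X$, with $X=\bigcup_i\overline{X_i}$; $\Delta:=\{x\in\overline{X_i}\cap\overline{X_j}:i\neq j\}=\{c_1,\dots,c_{N-1}\}$ with $\{c_i\}=\overline{X_i}\cap\overline{X_{i+1}}$. A piecewise contracting interval map is $f:X\to X$, discontinuous at each point of $\Delta$, with $\lambda\in(0,1)$ such that $|f(x)-f(y)|\leqslant\lambda|x-y|$ for $x,y$ in the same $X_i$; $f_i$ is the continuous extension of $f|_{X_i}$ to $\overline{X_i}$. Separation property: each $f_i$ injective and $f_i(\overline{X_i})\cap f_j(\overline{X_j})=\emptyset$ for $i\neq j$. $\widetilde X:=\bigcap_{n\geqslant0}f^{-n}(X\setminus\Delta)$; the itinerary of $x\in\widetilde X$ is $\theta$ with $\theta_t=i$ iff $f^t(x)\in X_i$; $p(\theta,n):=\#\{\theta_t\dots\theta_{t+n-1}:t\geqslant0\}$.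 Atoms: $F_i(A):=\overline{f(A\cap X_i)}$, $A_{i_1\dots i_n}:=F_{i_n}\circ\dots\circ F_{i_1}(X)$ is an atom of generation $n$ if non-empty; $\mathcal{A}_n$ is the set of these and $\mathcal{A}_n(x):=\{A\in\mathcal{A}_n:\exists t\in\mathbb{N},\ f^{t+n}(x)\in A\}$. $c_i\in\Delta$ is $n$-left-right visited by the orbit of $x$ if there is $A\in\mathcal{A}_n(x)$ with $c_i\in A$, $f^{t+n}(x)\in A\cap X_i$ and $f^{t'+n}(x)\in A\cap X_{i+1}$ for some $t,t'\in\mathbb{N}$; $\Delta^n_{lr}(x)$ is the set of such discontinuities. *)

From HB Require Import structures.
From mathcomp Require Import all_boot all_order all_algebra.
From mathcomp Require Import all_classical all_reals topology normedtype.
Set Implicit Arguments. Unset Strict Implicit. Unset Printing Implicit Defensive.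
Import Order.TTheory GRing.Theory Num.Theory numFieldTopology.Exports numFieldNormedType.Exports.
Local Open Scope classical_set_scope.
Local Open Scope ring_scope.

Section PCIM.
Variables (R : realType) (N : nat) (c : nat -> R) (f : R -> R).

Definition Xset : set R := [set y | c 0 <= y <= c N].

(* Pieces, 0-based: piece 0 = [c 0, c 1), piece i = (c i, c (i+1)) for
   0 < i < N-1, piece (N-1) = (c (N-1), c N]. The discontinuity c (j+1)
   separates piece j and piece j+1. *)
Definition piece (i : nat) : set R :=
  [set y | (if i == 0%N then c 0 <= y else c i < y) /\
           (if i == N.-1 then y <= c N else y < c i.+1)].

Definition cpiece (i : nat) : set R := [set y | c i <= y <= c i.+1].

Definition Fop (i : nat) (A : set R) : set R := closure (f @` (A `&` piece i)).

Definition atom (w : seq 'I_N) : set R := foldl (fun A (i : 'I_N) => Fop i A) Xset w.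

Definition atoms (n : nat) : set (set R) :=
  [set A | (exists w : n.-tuple 'I_N, A = atom w) /\ A !=set0].

Definition atoms_x (n : nat) (x : R) : set (set R) :=
  [set A | atoms n A /\ exists t : nat, A (iter (t + n) f x)].

(* Delta^n_lr(x), as the set of indices j (standing for c (j+1)) *)
Definition Delta_lr (n : nat) (x : R) : {set 'I_N.-1} :=
  [set j : 'I_N.-1 | `[< exists A, atoms_x n x A /\ A (c j.+1) /\
      (exists t : nat, A (iter (t + n) f x) /\ piece j (iter (t + n) f x)) /\
      (exists t' : nat, A (iter (t' + n) f x) /\ piece j.+1 (iter (t' + n) f x)) >]].

Definition card_Delta_in (A : set R) : nat :=
  #|[set j : 'I_N.-1 | `[< A (c j.+1) >]]|.

End PCIM.

Definition complexity (N : nat) (theta : nat -> 'I_N) (n : nat) : nat :=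
  #|[set w : n.-tuple 'I_N | `[< exists t : nat, w = [tuple theta (t + k)%N | k < n] >]]|.

(* Atoms of a fixed generation are closed intervals (closures of continuous
   images of intervals), and by the separation property two atoms of the same
   generation with a common point carry the same word.  Hence a factor w of
   length n of the itinerary determines the atom A_w containing f^(t+n)(x) for
   every occurrence t of w, and the letters following w are the pieces visited
   by these points.  As A_w is an interval, two visited pieces i < k force
   c_(i+1), ..., c_k into A_w, so w has at most #(A_w ∩ Δ) + 1 right extensions,
   at least one more than the discontinuities of A_w visited from both sides,
   and exactly that many when #(A_w ∩ Δ) <= 1.  Summing over w, the sets
   A_w ∩ Δ are pairwise disjoint: their sizes add up to at most #Δ, and the
   two-sided ones add up to #Δ^n_lr(x). *)

From HB Require Import structures.
From mathcomp Require Import all_boot all_order all_algebra.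
From mathcomp Require Import all_classical all_reals topology normedtype.
From mathcomp Require Import zify.
Import Order.TTheory GRing.Theory Num.Theory numFieldTopology.Exports numFieldNormedType.Exports.
Set Implicit Arguments. Unset Strict Implicit. Unset Printing Implicit Defensive.

Section Intervals.
Local Open Scope classical_set_scope.
Variable R : realType.
Implicit Types A B : set R.

Lemma is_intervalI A B : is_interval A -> is_interval B -> is_interval (A `&` B).
Proof.
by move=> iA iB a b [Aa Ba] [Ab Bb] y aby; split; [apply: (iA a b)|apply: (iB a b)].
Qed.

Lemma is_interval_closure A : is_interval A -> is_interval (closure A).
Proof. by move/connected_intervalP/connected_closure/connected_intervalP. Qed.

Lemma is_interval_image A (g : R -> R) :
  is_interval A -> {within A, continuous g} -> is_interval (g @` A).
Proof.
by move=> /connected_intervalP cA gA; apply/connected_intervalP/connected_continuous_connected.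
Qed.

End Intervals.

Section Atoms.
Local Open Scope classical_set_scope.
Local Open Scope ring_scope.
Variables (R : realType) (N : nat) (c : nat -> R) (f : R -> R) (fi : nat -> R -> R).
Hypothesis c_lt : forall i, (i < N)%N -> c i < c i.+1.
Hypothesis fi_cont : forall i, (i < N)%N -> {within cpiece c i, continuous fi i}.
Hypothesis fi_ext : forall (i : nat) y, (i < N)%N -> piece N c i y -> fi i y = f y.
Hypothesis fi_inj : forall (i : nat) y z, (i < N)%N -> cpiece c i y -> cpiece c i z ->
  fi i y = fi i z -> y = z.
Hypothesis fi_sep : forall i j, (i < N)%N -> (j < N)%N -> i <> j ->
  fi i @` cpiece c i `&` fi j @` cpiece c j = set0.

Lemma Xset_itv : Xset N c = `[c 0, c N]%classic.
Proof. by apply/seteqP; split => y; rewrite /Xset /= in_itv. Qed.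

Lemma cpiece_itv i : cpiece c i = `[c i, c i.+1]%classic.
Proof. by apply/seteqP; split => y; rewrite /cpiece /= in_itv. Qed.

Lemma le_c m n : (m <= n <= N)%N -> c m <= c n.
Proof.
elim: n => [|n IHn]; first by rewrite leqn0 => /andP[/eqP ->].
rewrite leq_eqVlt ltnS => /andP[/orP[/eqP -> //|mn] nN].
by apply: le_trans (ltW (c_lt nN)); rewrite IHn // mn ltnW.
Qed.

Lemma piece_lt i y : piece N c i y -> (i < N.-1)%N -> y < c i.+1.
Proof. by case=> _; case: ifP => [/eqP -> /=|//]; rewrite ltnn. Qed.

Lemma piece_gt i y : piece N c i y -> (0 < i)%N -> c i < y.
Proof. by case; case: ifP => [/eqP ->|//]; rewrite ltnn. Qed.

Lemma piece_uniq i k y : (i < N)%N -> (k < N)%N ->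
  piece N c i y -> piece N c k y -> i = k.
Proof.
have disj j l : (j < l < N)%N -> piece N c j y -> piece N c l y -> False.
  move=> jlN jy ly; have l_gt0 : (0 < l)%N by lia.
  have jN : (j < N.-1)%N by lia.
  have : c l < c j.+1 := lt_trans (piece_gt ly l_gt0) (piece_lt jy jN).
  by rewrite ltNge le_c //; lia.
move=> iN kN iy ky; case: (ltngtP i k) => // ik; exfalso.
  by apply: (disj i k) => //; rewrite ik.
by apply: (disj k i) => //; rewrite ik.
Qed.

Lemma is_interval_piece i : is_interval (piece N c i).
Proof.
move=> a b [a1 _] [_ b2] y /andP[ay yb]; split.
  by case: ifP a1 => _ h; [exact: le_trans ay|exact: lt_le_trans ay].
by case: ifP b2 => _ h; [exact: le_trans h|exact: le_lt_trans h].
Qed.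

Lemma piece_sub_cpiece i : (i < N)%N -> piece N c i `<=` cpiece c i.
Proof.
move=> iN y [y1 y2]; apply/andP; split.
  by move: y1; case: ifP => [/eqP -> //|_ /ltW].
move: y2; case: ifP => [/eqP iN1|_ /ltW //].
by rewrite iN1 prednK // (leq_ltn_trans _ iN).
Qed.

Lemma FopE i A : (i < N)%N -> Fop N c f i A = closure (fi i @` (A `&` piece N c i)).
Proof.
move=> iN; congr closure; apply/seteqP; split => _ [y [Ay piy] <-];
  by exists y => //; rewrite fi_ext.
Qed.

Lemma is_interval_Fop i A : (i < N)%N -> is_interval A -> is_interval (Fop N c f i A).
Proof.
move=> iN iA; rewrite FopE //; apply/is_interval_closure/is_interval_image.
  exact: is_intervalI iA (@is_interval_piece i).
apply: continuous_subspaceW (fi_cont iN) => y [_]; exact: piece_sub_cpiece.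
Qed.

Lemma Fop_sub_image i A : (i < N)%N -> closed A ->
  Fop N c f i A `<=` fi i @` (A `&` cpiece c i).
Proof.
move=> iN cA; rewrite FopE //.
have compact_image : compact (fi i @` (A `&` cpiece c i)).
  apply: continuous_compact; first exact: continuous_subspaceW (fi_cont iN).
  by rewrite setIC; apply: compact_closedI => //; rewrite cpiece_itv; exact: segment_compact.
rewrite [X in _ `<=` X](closure_id _).1; last exact: compact_closed.
by apply/closureS/image_subset; apply: setIS; apply: piece_sub_cpiece.
Qed.

Lemma atom_rcons (w : seq 'I_N) i : atom c f (rcons w i) = Fop N c f i (atom c f w).
Proof. by rewrite /atom foldl_rcons. Qed.

Lemma closed_atom (w : seq 'I_N) : closed (atom c f w).
Proof.
elim/last_ind: w => [|w i _]; last by rewrite atom_rcons; exact: closed_closure.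
by rewrite /atom /= Xset_itv; exact: interval_closed.
Qed.

Lemma is_interval_atom (w : seq 'I_N) : is_interval (atom c f w).
Proof.
elim/last_ind: w => [|w i IHw]; last by rewrite atom_rcons; exact: is_interval_Fop.
by rewrite /atom /= Xset_itv; exact: interval_is_interval.
Qed.

(* Separation identifies the last letters, and injectivity of [fi i] pulls the
   common point back one generation. *)
Lemma atom_meet_eq (w w' : seq 'I_N) y : size w = size w' ->
  atom c f w y -> atom c f w' y -> w = w'.
Proof.
elim/last_ind: w w' y => [|w i IHw] w' y; first by case: w'.
case/lastP: w' => [|w' i']; first by rewrite size_rcons.
rewrite !size_rcons !atom_rcons => -[sz].
move=> /(Fop_sub_image (ltn_ord i) (@closed_atom w)) [a [wa ia] <-].
move=> /(Fop_sub_image (ltn_ord i') (@closed_atom w')) [a' [wa' ia'] eaa'].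
have ii' : i = i'.
  have [/val_inj //|/eqP neq] := eqVneq (val i) (val i').
  have : (fi i @` cpiece c i `&` fi i' @` cpiece c i') (fi i a).
    by split; [exists a|exists a'].
  by rewrite (fi_sep (ltn_ord i) (ltn_ord i') neq).
subst i'; have aa' : a' = a by apply: (fi_inj (ltn_ord i)).
by subst a'; rewrite (IHw w' a).
Qed.

End Atoms.

Lemma card_set_pairs (I T : finType) (A : {pred I}) (S : I -> {set T}) :
  #|[set p : I * T | (p.1 \in A) && (p.2 \in S p.1)]| = (\sum_(i in A) #|S i|)%N.
Proof.
under [RHS]eq_bigr => i _ do rewrite -sum1_card.
by rewrite pair_big_dep sum1dep_card; apply: eq_card => p; rewrite !inE.
Qed.

Lemma card_bigcup_disjoint (I T : finType) (A : {pred I}) (S : I -> {set T}) :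
  (forall i i' t, i \in A -> i' \in A -> t \in S i -> t \in S i' -> i = i') ->
  #|\bigcup_(i in A) S i| = (\sum_(i in A) #|S i|)%N.
Proof.
move=> disjS; rewrite -card_set_pairs -(card_in_imset (f := snd)).
  apply: eq_card => t; apply/bigcupP/imsetP => [[i iA tS]|[[i t'] /=]].
    by exists (i, t); rewrite // inE iA.
  by rewrite inE => /andP[iA tS] ->; exists i.
move=> [i t] [i' t'] /=; rewrite !inE => /andP[iA tS] /andP[iA' tS'] /= ett'.
by rewrite ett' in tS *; rewrite (disjS i i' t').
Qed.

Section OrdinalGaps.
Variables (m : nat) (E : {set 'I_m.+1}) (D : {set 'I_m}).

(* Discontinuity [j] separates the pieces [lift ord_max j] (value [j]) and
   [lift ord0 j] (value [j.+1]). *)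
Definition two_sided : {set 'I_m} :=
  [set j in D | (lift ord_max j \in E) && (lift ord0 j \in E)].

Lemma ord_lt_lift_max (i k : 'I_m.+1) : (i < k)%N -> exists j : 'I_m, i = lift ord_max j.
Proof.
case: (unliftP ord_max i) => [j ->|->]; first by exists j.
by rewrite /= ltnNge -ltnS ltn_ord.
Qed.

Lemma ord_lt_lift0 (i k : 'I_m.+1) : (i < k)%N -> exists j : 'I_m, k = lift ord0 j.
Proof. by case: (unliftP ord0 k) => [j ->|->]; [exists j|rewrite ltn0]. Qed.

Lemma ord_min_lt : (0 < #|E|)%N ->
  exists2 e0, e0 \in E & {in E, forall k, k != e0 -> (e0 < k)%N}.
Proof.
case/card_gt0P => e eE; case: (arg_minnP (fun i : 'I_m.+1 => i : nat) eE) => e0 e0E e0min.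
exists e0 => // k kE ke0; rewrite ltn_neqAle e0min // andbT.
by apply: contra ke0; rewrite eq_sym val_eqE.
Qed.

Lemma card_le_lift0 (e0 : 'I_m.+1) (S : {set 'I_m}) :
  E \subset e0 |: lift ord0 @: S -> (#|E| <= #|S|.+1)%N.
Proof.
move/subset_leq_card/leq_trans; apply.
rewrite cardsU1 card_imset; last exact: lift_inj.
by rewrite -[#|S|.+1]add1n leq_add2r leq_b1.
Qed.

Lemma card_two_sided_lt : (0 < #|E|)%N -> (#|two_sided| < #|E|)%N.
Proof.
case/card_gt0P => e eE; case: (arg_minnP (fun i : 'I_m.+1 => i : nat) eE) => e0 e0E e0min.
have : e0 |: lift ord0 @: two_sided \subset E.
  apply/fintype.subsetP => k; rewrite in_setU1 => /predU1P[-> //|/imsetP[j]].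
  by rewrite inE => /and3P[_ _ jE] ->.
move/subset_leq_card; apply: leq_trans.
rewrite cardsU1 card_imset; last exact: lift_inj.
suff -> : e0 \notin lift ord0 @: two_sided by [].
apply/imsetP => -[j]; rewrite inE => /and3P[_ jE _] e0j.
by have := e0min _ jE; rewrite e0j lift0 lift_max ltnn.
Qed.

Hypothesis gaps : forall (i k : 'I_m.+1) (j : 'I_m),
  i \in E -> k \in E -> (i <= j < k)%N -> j \in D.

Lemma card_gaps_le : (#|E| <= #|D|.+1)%N.
Proof.
case: (posnP #|E|) => [-> //|/ord_min_lt[e0 e0E e0min]].
apply: (card_le_lift0 (e0 := e0)); apply/fintype.subsetP => k kE; rewrite in_setU1.
case: eqVneq => //= ke0; have e0k := e0min k kE ke0.
have [j kj] := ord_lt_lift0 e0k; subst k.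
have e0j : (e0 <= j)%N by move: e0k; rewrite lift0.
by rewrite imset_f //; apply: (gaps e0E kE); rewrite e0j lift0 ltnSn.
Qed.

Lemma card_gaps_le_two_sided : (#|D| <= 1)%N -> (#|E| <= #|two_sided|.+1)%N.
Proof.
move=> /card_le1_eqP D_le1.
case: (posnP #|E|) => [-> //|/ord_min_lt[e0 e0E e0min]].
apply: (card_le_lift0 (e0 := e0)); apply/fintype.subsetP => k kE; rewrite in_setU1.
case: eqVneq => //= ke0; have e0k := e0min k kE ke0.
have [j kj] := ord_lt_lift0 e0k; have [j0 e0j0] := ord_lt_lift_max e0k; subst k.
have e0_j0 : e0 = j0 :> nat by rewrite e0j0 lift_max.
have j0D : j0 \in D by apply: (gaps e0E kE); rewrite -e0_j0 leqnn e0k.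
have e0j : (e0 <= j)%N by move: e0k; rewrite lift0.
have jD : j \in D by apply: (gaps e0E kE); rewrite e0j lift0 ltnSn.
have j0j : j0 = j by apply/esym/D_le1.
by rewrite imset_f // inE jD kE -j0j -e0j0 e0E.
Qed.

End OrdinalGaps.

Section Itinerary.
Local Open Scope ring_scope.
Variables (R : realType) (m : nat) (c : nat -> R) (f : R -> R) (fi : nat -> R -> R).
Variables (x : R) (theta : nat -> 'I_m.+1).
Hypothesis c_lt : forall i, (i < m.+1)%N -> c i < c i.+1.
Hypothesis fi_cont :
  forall i, (i < m.+1)%N -> ({within cpiece c i, continuous fi i})%classic.
Hypothesis fi_ext : forall (i : nat) y, (i < m.+1)%N -> piece m.+1 c i y -> fi i y = f y.
Hypothesis fi_inj : forall (i : nat) y z, (i < m.+1)%N -> cpiece c i y -> cpiece c i z ->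
  fi i y = fi i z -> y = z.
Hypothesis fi_sep : forall i j, (i < m.+1)%N -> (j < m.+1)%N -> i <> j ->
  (fi i @` cpiece c i `&` fi j @` cpiece c j = set0)%classic.
Hypothesis orbit_in_X : forall t, Xset m.+1 c (iter t f x).
Hypothesis theta_piece : forall t, piece m.+1 c (theta t) (iter t f x).

Local Notation factor t n := [tuple theta (t + k)%N | k < n].

Definition factors n : {set n.-tuple 'I_m.+1} := [set w | `[< exists t, w = factor t n >]].

Definition followers n (w : n.-tuple 'I_m.+1) : {set 'I_m.+1} :=
  [set i | `[< exists t, w = factor t n /\ i = theta (t + n)%N >]].

Definition disc_in (A : set R) : {set 'I_m} := [set j : 'I_m | `[< A (c j.+1) >]].

Definition lr_disc n (w : n.-tuple 'I_m.+1) : {set 'I_m} :=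
  two_sided (followers w) (disc_in (atom c f w)).

Lemma factor_val t n : val (factor t n) = [seq theta (t + k)%N | k <- iota 0 n].
Proof. by rewrite /= -val_enum_ord -map_comp. Qed.

Lemma factor_rcons t n : val (factor t n.+1) = rcons (factor t n) (theta (t + n)%N).
Proof. by rewrite !factor_val -[n.+1]addn1 iotaD map_cat cats1. Qed.

Lemma orbit_in_atom t n : atom c f (factor t n) (iter (t + n) f x).
Proof.
elim: n => [|n IHn]; first by rewrite addn0 /atom factor_val; exact: orbit_in_X.
rewrite factor_rcons atom_rcons addnS iterS; apply: subset_closure.
by exists (iter (t + n) f x).
Qed.

Lemma factor_atom_eq n (w w' : n.-tuple 'I_m.+1) y :
  atom c f w y -> atom c f w' y -> w = w'.
Proof.
move=> wy w'y; apply: val_inj; apply: (atom_meet_eq fi_cont fi_ext fi_inj fi_sep) wy w'y.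
by rewrite !size_tuple.
Qed.

Lemma theta_of_piece t (j : nat) : (j < m.+1)%N -> piece m.+1 c j (iter t f x) ->
  theta t = j :> nat.
Proof.
by move=> jm jt; apply: (piece_uniq c_lt (ltn_ord (theta t)) jm (theta_piece t) jt).
Qed.

Lemma complexity_factors n : complexity theta n = #|factors n|.
Proof. by apply: eq_card => w; rewrite inE; apply/idP/idP => [/set_mem|/mem_set]. Qed.

Lemma card_Delta_in_disc_in (A : set R) : card_Delta_in m.+1 c A = #|disc_in A|.
Proof. by apply: eq_card => j; rewrite inE; apply/idP/idP => [/set_mem|/mem_set]. Qed.

Lemma card_factorsS n : #|factors n.+1| = (\sum_(w in factors n) #|followers w|)%N.
Proof.
pose ext (p : n.-tuple 'I_m.+1 * 'I_m.+1) := rcons_tuple p.1 p.2.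
have ext_inj : injective ext.
  by move=> [w i] [w' i'] /(congr1 val) /rcons_inj [/val_inj -> ->].
rewrite -card_set_pairs -(card_imset _ ext_inj); apply: eq_card => u.
rewrite inE; apply/asboolP/imsetP => [[t ->]|[[w i]]].
  exists (factor t n, theta (t + n)%N); last by apply: val_inj; rewrite factor_rcons.
  by rewrite !inE; apply/andP; split; apply/asboolP; exists t.
rewrite !inE => /andP[_ /asboolP[t [/= -> ->]]] ->.
by exists t; apply: val_inj; rewrite factor_rcons.
Qed.

Lemma followers_gt0 n (w : n.-tuple 'I_m.+1) : w \in factors n -> (0 < #|followers w|)%N.
Proof.
rewrite inE => /asboolP[t wt]; apply/card_gt0P; exists (theta (t + n)%N).
by rewrite inE; apply/asboolP; exists t.
Qed.

Lemma followers_orbit n (w : n.-tuple 'I_m.+1) i : i \in followers w ->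
  exists t, atom c f w (iter (t + n) f x) /\ piece m.+1 c i (iter (t + n) f x).
Proof.
rewrite inE => /asboolP[t [-> ->]].
by exists t; split; [exact: orbit_in_atom|exact: theta_piece].
Qed.

Lemma followers_gaps n (w : n.-tuple 'I_m.+1) (i k : 'I_m.+1) (j : 'I_m) :
  i \in followers w -> k \in followers w -> (i <= j < k)%N -> j \in disc_in (atom c f w).
Proof.
move=> /followers_orbit[t [wt it]] /followers_orbit[t' [wt' kt']] ijk.
have := ltn_ord j; have := ltn_ord k => km jm.
rewrite inE; apply/asboolP/(is_interval_atom fi_cont fi_ext wt wt'); apply/andP; split.
  have im : (i < m.+1.-1)%N by lia.
  by apply/ltW/(lt_le_trans (piece_lt it im))/(le_c c_lt); lia.
have k_gt0 : (0 < k)%N by lia.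
by apply/ltW/(le_lt_trans _ (piece_gt kt' k_gt0))/(le_c c_lt); lia.
Qed.

Lemma atoms_x_factor n (w : n.-tuple 'I_m.+1) :
  w \in factors n -> atoms_x m.+1 c f n x (atom c f w).
Proof.
rewrite inE => /asboolP[t ->]; split; last by exists t; exact: orbit_in_atom.
by split; [exists (factor t n)|exists (iter (t + n) f x); exact: orbit_in_atom].
Qed.

Lemma Delta_lr_bigcup n : Delta_lr m.+1 c f n x = \bigcup_(w in factors n) lr_disc w.
Proof.
apply/finset.setP => j; rewrite inE; apply/asboolP/bigcupP.
  move=> [_ [[[[w ->] _] _] [wj [[t [wt jt]] [t' [wt' jt']]]]]].
  have w_t := factor_atom_eq wt (orbit_in_atom t n).
  have w_t' := factor_atom_eq wt' (orbit_in_atom t' n).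
  exists w; first by rewrite inE; apply/asboolP; exists t.
  rewrite !inE; apply/and3P; split; first exact/asboolP.
    apply/asboolP; exists t; split => //; apply: ord_inj.
    by rewrite lift_max (theta_of_piece (leqW (ltn_ord j)) jt).
  apply/asboolP; exists t'; split => //; apply: ord_inj.
  by rewrite lift0 (theta_of_piece (ltn_ord j : j.+1 < m.+1)%N jt').
move=> [w wn]; rewrite !inE => /and3P[/asboolP wj /asboolP[t [wt jt]] /asboolP[t' [wt' jt']]].
exists (atom c f w); split; first exact: atoms_x_factor.
split=> //; split.
  exists t; rewrite wt -lift_max jt; split; [exact: orbit_in_atom|exact: theta_piece].
exists t'; rewrite wt' -lift0 jt'; split; [exact: orbit_in_atom|exact: theta_piece].
Qed.

Lemma card_Delta_lr n :
  #|Delta_lr m.+1 c f n x| = (\sum_(w in factors n) #|lr_disc w|)%N.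
Proof.
rewrite Delta_lr_bigcup; apply: card_bigcup_disjoint => w w' j _ _.
by rewrite !inE => /andP[/asboolP wj _] /andP[/asboolP w'j _]; exact: factor_atom_eq wj w'j.
Qed.

Lemma sum_card_disc_in n : (\sum_(w in factors n) #|disc_in (atom c f w)| <= m)%N.
Proof.
rewrite -card_bigcup_disjoint => [|w w' j _ _].
  by rewrite (leq_trans (max_card _)) ?card_ord.
by rewrite !inE => wj w'j; exact: factor_atom_eq wj w'j.
Qed.

Lemma complexity_bounds n :
  (#|Delta_lr m.+1 c f n x| + complexity theta n <= complexity theta n.+1)%N /\
  (complexity theta n.+1 <= complexity theta n + m)%N.
Proof.
rewrite !complexity_factors card_factorsS card_Delta_lr -sum1_card -big_split /=; split.
  apply: leq_sum => w wn; rewrite addn1.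
  exact: card_two_sided_lt (followers_gt0 wn).
apply: (@leq_trans (\sum_(w in factors n) #|disc_in (atom c f w)|.+1)).
  by apply: leq_sum => w _; apply: card_gaps_le; exact: followers_gaps.
under eq_bigr => w _ do rewrite -addn1.
by rewrite big_split /= addnC leq_add2l sum_card_disc_in.
Qed.

Lemma complexity_succ n :
  (forall A, atoms_x m.+1 c f n x A -> (card_Delta_in m.+1 c A <= 1)%N) ->
  complexity theta n.+1 = (complexity theta n + #|Delta_lr m.+1 c f n x|)%N.
Proof.
move=> atoms_le1; apply/eqP; rewrite eqn_leq addnC (complexity_bounds n).1 andbT.
rewrite !complexity_factors card_factorsS card_Delta_lr -sum1_card -big_split /=.
apply: leq_sum => w wn; rewrite addn1; apply: card_gaps_le_two_sided.
  exact: followers_gaps.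
by rewrite -card_Delta_in_disc_in; apply: atoms_le1; exact: atoms_x_factor.
Qed.
End Itinerary.

Local Open Scope classical_set_scope.
Local Open Scope ring_scope.

Theorem lemma5 (R : realType) (N : nat) (c : nat -> R) (f : R -> R)
    (fi : nat -> R -> R) (lambda : R) (x : R) (theta : nat -> 'I_N) :
  (2 <= N)%N ->
  (* partition points c 0 < c 1 < ... < c N *)
  (forall i, (i < N)%N -> c i < c i.+1) ->
  (* f : X -> X *)
  (forall y, Xset N c y -> Xset N c (f y)) ->
  (* f is discontinuous at each point of Delta *)
  (forall j, (0 < j < N)%N -> ~ {for c j, continuous f}) ->
  (* piecewise contraction *)
  0 < lambda < 1 ->
  (forall (i : nat) y z, (i < N)%N -> piece N c i y -> piece N c i z ->
     `|f y - f z| <= lambda * `|y - z|) ->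
  (* fi i is the continuous extension of f restricted to X_i to its closure *)
  (forall i, (i < N)%N -> {within cpiece c i, continuous fi i}) ->
  (forall (i : nat) y, (i < N)%N -> piece N c i y -> fi i y = f y) ->
  (* separation property *)
  (forall (i : nat) y z, (i < N)%N -> cpiece c i y -> cpiece c i z ->
     fi i y = fi i z -> y = z) ->
  (forall i j, (i < N)%N -> (j < N)%N -> i <> j ->
     fi i @` cpiece c i `&` fi j @` cpiece c j = set0) ->
  (* x in X~ and theta its itinerary *)
  (forall t, Xset N c (iter t f x) /\ forall j, (0 < j < N)%N -> iter t f x <> c j) ->
  (forall t, piece N c (theta t) (iter t f x)) ->
  (forall n, (1 <= n)%N ->
     (#|Delta_lr N c f n x| + complexity theta n <= complexity theta n.+1)%N /\
     (complexity theta n.+1 <= complexity theta n + N.-1)%N) /\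
  (forall n0 : nat, (1 <= n0)%N ->
     (forall n, (n0 <= n)%N -> forall A, atoms_x N c f n x A -> (card_Delta_in N c A <= 1)%N) ->
     (forall m : nat, (1 <= m)%N ->
        (forall n, (m <= n)%N -> forall A, atoms_x N c f n x A -> (card_Delta_in N c A <= 1)%N) ->
        (n0 <= m)%N) ->
     forall n, (n0 <= n)%N ->
       complexity theta n.+1 = (complexity theta n + #|Delta_lr N c f n x|)%N).
Proof.
move=> N_ge2 c_lt _ _ _ _ fi_cont fi_ext fi_inj fi_sep orbit_tilde theta_piece.
case: N => [//|m] in theta N_ge2 c_lt fi_cont fi_ext fi_inj fi_sep
  orbit_tilde theta_piece *.
have orbit_in_X t : Xset m.+1 c (iter t f x) by case: (orbit_tilde t).
have bounds := complexity_bounds c_lt fi_cont fi_ext fi_inj fi_sep orbit_in_X theta_piece.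
have succ := complexity_succ c_lt fi_cont fi_ext fi_inj fi_sep orbit_in_X theta_piece.
by split=> [n _|n0 _ atoms_le1 _ n n0n]; [exact: bounds|exact: succ (atoms_le1 n n0n)].
Qed.
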